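(* Let $P$ be a poset, $\mathcal F$ a standard collection of upsets of $P$ and $\mathcal I$ a standard collection of downsets of $P$, and let $e:P\to C$ be a canonical extension of $P$ with respect to $(\mathcal F,\mathcal I)$. Regard $\mathcal I$ as a poset ordered by inclusion and $\mathcal F$ as a poset ordered by reverse inclusion. Define $e_{\mathcal I}:P\to\mathcal I$ by $e_{\mathcal I}(p)=p^\downarrow$, $e_{\mathcal F}:P\to\mathcal F$ by $e_{\mathcal F}(p)=p^\uparrow$, $\pi_{\mathcal I}:\mathcal I\to C$ by $\pi_{\mathcal I}(I)=\bigvee e[I]$ and $\pi_{\mathcal F}:\mathcal F\to C$ by $\pi_{\mathcal F}(F)=\bigwedge e[F]$. Then: (1) $\pi_{\mathcal F}$ and $\pi_{\mathcal I}$ are order-embeddings. (2) If $S\subseteq P$ and $\bigwedge e_{\mathcal F}[S]$ exists in $\mathcal F$, then $\bigwedge\pi_{\mathcal F}\circ e_{\mathcal F}[S]=\pi_{\mathcal F}(\bigwedge e_{\mathcal F}[S])$ in $C$. Similarly, if $T\subseteq P$ and $\bigvee e_{\mathcal I}[T]$ exists in $\mathcal I$, then $\bigvee\pi_{\mathcal I}\circ e_{\mathcal I}[T]=\pi_{\mathcal I}(\bigvee e_{\mathcal I}[T])$ in $C$.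
   Context: For $p\in P$, $p^\uparrow=\{q\in P:q\ge p\}$ and $p^\downarrow=\{q\in P:q\le p\}$. A collection of upsets of $P$ is standard if it contains every principal upset $p^\uparrow$; a collection of downsets is standard if it contains every $p^\downarrow$. A completion of $P$ is an order-embedding $e:P\to C$ into a complete lattice. A canonical extension of $P$ with respect to $(\mathcal F,\mathcal I)$ is a completion $e:P\to C$ such that (i) ($(\mathcal F,\mathcal I)$-dense) every $z\in C$ satisfies $z=\bigvee\{\bigwedge e[F]:F\in\mathcal F,\ \bigwedge e[F]\le z\}=\bigwedge\{\bigvee e[I]:I\in\mathcal I,\ \bigvee e[I]\ge z\}$, and (ii) ($(\mathcal F,\mathcal I)$-compact) whenever $F\in\mathcal F$, $I\in\mathcal I$ and $\bigwedge e[F]\le\bigvee e[I]$, then $F\cap I\ne\emptyset$. *)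

From HB Require Import structures.
From mathcomp Require Import all_boot all_order.
Set Implicit Arguments. Unset Strict Implicit. Unset Printing Implicit Defensive.
Import Order.Theory.
Local Open Scope order_scope.

Section Defs.
Context {dP : Order.disp_t} {P : porderType dP}.

Definition up (p : P) : P -> Prop := fun q => p <= q.
Definition down (p : P) : P -> Prop := fun q => q <= p.

Definition is_upset (U : P -> Prop) := forall x y, U x -> x <= y -> U y.
Definition is_downset (D : P -> Prop) := forall x y, D y -> x <= y -> D x.

Definition standard_upsets (FF : (P -> Prop) -> Prop) :=
  (forall U, FF U -> is_upset U) /\ (forall p, FF (up p)).
Definition standard_downsets (II : (P -> Prop) -> Prop) :=
  (forall D, II D -> is_downset D) /\ (forall p, II (down p)).

Definition incl (A B : P -> Prop) := forall x, A x -> B x.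
End Defs.

Definition img {A B : Type} (f : A -> B) (S : A -> Prop) : B -> Prop :=
  fun b => exists2 a, S a & b = f a.

Section Bounds.
Context {d : Order.disp_t} {C : porderType d}.
Definition is_lub (A : C -> Prop) (x : C) :=
  (forall a, A a -> a <= x) /\ (forall y, (forall a, A a -> a <= y) -> x <= y).
Definition is_glb (A : C -> Prop) (x : C) :=
  (forall a, A a -> x <= a) /\ (forall y, (forall a, A a -> y <= a) -> y <= x).
End Bounds.

Record complete_lattice {d : Order.disp_t} (C : porderType d) := CompleteLattice {
  csup : (C -> Prop) -> C;
  cinf : (C -> Prop) -> C;
  csupP : forall A, is_lub A (csup A);
  cinfP : forall A, is_glb A (cinf A) }.

Definition lub_in {T : Type} (D : T -> Prop) (le : T -> T -> Prop)
  (A : T -> Prop) (G : T) :=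
  D G /\ (forall X, A X -> le X G) /\
  (forall Y, D Y -> (forall X, A X -> le X Y) -> le G Y).
Definition glb_in {T : Type} (D : T -> Prop) (le : T -> T -> Prop)
  (A : T -> Prop) (G : T) :=
  D G /\ (forall X, A X -> le G X) /\
  (forall Y, D Y -> (forall X, A X -> le Y X) -> le Y G).

Definition order_embedding_on {T : Type} {d : Order.disp_t} {C : porderType d}
  (D : T -> Prop) (le : T -> T -> Prop) (f : T -> C) :=
  forall X Y, D X -> D Y -> ((f X <= f Y) <-> le X Y).

Section Canonical.
Context {dP dC : Order.disp_t} {P : porderType dP} {C : porderType dC}.
Variable (L : complete_lattice C).

Definition completion (e : P -> C) := forall p q, (e p <= e q) = (p <= q).

Definition piF (e : P -> C) (U : P -> Prop) : C := cinf L (img e U).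
Definition piI (e : P -> C) (D : P -> Prop) : C := csup L (img e D).

Definition dense (FF II : (P -> Prop) -> Prop) (e : P -> C) :=
  forall z : C,
    z = csup L (fun c => exists2 U, FF U & piF e U <= z /\ c = piF e U) /\
    z = cinf L (fun c => exists2 D, II D & z <= piI e D /\ c = piI e D).

Definition compact (FF II : (P -> Prop) -> Prop) (e : P -> C) :=
  forall U D, FF U -> II D -> piF e U <= piI e D -> exists p, U p /\ D p.

Definition canonical_extension (FF II : (P -> Prop) -> Prop) (e : P -> C) :=
  completion e /\ dense FF II e /\ compact FF II e.
End Canonical.

From HB Require Import structures.
From mathcomp Require Import all_boot all_order.
Import Order.Theory.
Local Open Scope order_scope.

(* Compactness turns [piF U <= e v] into [U v] (test against the principal
   downset of v), and dually for [piI]; this makes both maps order-reflecting.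
   For meets, density writes the meet z in C as the join of the [piF U] below
   it; each such U lies below every member of the family in F, hence below its
   meet G in F, so [piF U <= piF G] and z <= piF G. *)

Section CompleteLatticeBounds.
Context {d : Order.disp_t} {C : porderType d}.
Variable L : complete_lattice C.

Lemma cinf_le (A : C -> Prop) a : A a -> cinf L A <= a.
Proof. exact: (cinfP L A).1. Qed.

Lemma le_cinf (A : C -> Prop) y : (forall a, A a -> y <= a) -> y <= cinf L A.
Proof. exact: (cinfP L A).2. Qed.

Lemma le_csup (A : C -> Prop) a : A a -> a <= csup L A.
Proof. exact: (csupP L A).1. Qed.

Lemma csup_le (A : C -> Prop) y : (forall a, A a -> a <= y) -> csup L A <= y.
Proof. exact: (csupP L A).2. Qed.

End CompleteLatticeBounds.

Section PiMaps.
Context {dP dC : Order.disp_t} {P : porderType dP} {C : porderType dC}.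
Variables (L : complete_lattice C) (e : P -> C).

Lemma le_piF (U V : P -> Prop) : incl V U -> piF L e U <= piF L e V.
Proof.
move=> VU; apply: le_cinf => _ [q Vq ->].
by apply: cinf_le; exists q => //; apply: VU.
Qed.

Lemma le_piI (U V : P -> Prop) : incl U V -> piI L e U <= piI L e V.
Proof.
move=> UV; apply: csup_le => _ [q Uq ->].
by apply: le_csup; exists q => //; apply: UV.
Qed.

Hypothesis e_completion : completion e.

Lemma piF_up p : piF L e (up p) = e p.
Proof.
apply/le_anti/andP; split; first by apply: cinf_le; exists p => //; rewrite /up.
by apply: le_cinf => _ [q pq ->]; rewrite e_completion.
Qed.

Lemma piI_down p : piI L e (down p) = e p.
Proof.
apply/le_anti/andP; split; last by apply: le_csup; exists p => //; rewrite /down.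
by apply: csup_le => _ [q qp ->]; rewrite e_completion.
Qed.

End PiMaps.

Section CanonicalExtension.
Context {dP dC : Order.disp_t} {P : porderType dP} {C : porderType dC}.
Context {L : complete_lattice C} {FF II : (P -> Prop) -> Prop} {e : P -> C}.
Hypotheses (FF_std : standard_upsets FF) (II_std : standard_downsets II).
Hypotheses (e_completion : completion e) (e_compact : compact L FF II e).

Lemma piF_le_mem (U : P -> Prop) v : FF U -> piF L e U <= e v -> U v.
Proof.
move=> FFU; rewrite -(piI_down L e e_completion) => /e_compact.
case/(_ FFU (II_std.2 v)) => p [Up pv].
exact: FF_std.1 U FFU p v Up pv.
Qed.

Lemma mem_le_piI (D : P -> Prop) u : II D -> e u <= piI L e D -> D u.
Proof.
move=> IID; rewrite -(piF_up L e e_completion) => /e_compact.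
case/(_ (FF_std.2 u) IID) => p [up Dp].
exact: II_std.1 D IID u p Dp up.
Qed.

Lemma piF_embedding : order_embedding_on FF (fun U V => incl V U) (piF L e).
Proof.
move=> U V FFU _; split; last exact: le_piF.
move=> UV v Vv; apply: piF_le_mem => //.
by apply: le_trans UV _; apply: cinf_le; exists v.
Qed.

Lemma piI_embedding : order_embedding_on II incl (piI L e).
Proof.
move=> U V _ IIV; split; last exact: le_piI.
move=> UV u Uu; apply: mem_le_piI => //.
by apply: le_trans UV; apply: le_csup; exists u.
Qed.

Hypothesis e_dense : dense L FF II e.

Lemma le_by_piF (z w : C) :
  (forall U, FF U -> piF L e U <= z -> piF L e U <= w) -> z <= w.
Proof.
move=> below; rewrite (e_dense z).1.
by apply: csup_le => _ [U FFU [Uz ->]]; apply: below.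
Qed.

Lemma le_by_piI (z w : C) :
  (forall D, II D -> w <= piI L e D -> z <= piI L e D) -> z <= w.
Proof.
move=> above; rewrite [w](e_dense w).2.
by apply: le_cinf => _ [D IID [wD ->]]; apply: above.
Qed.

Lemma piF_glb {I : Type} (S : I -> Prop) (X : I -> P -> Prop) G :
  (forall i, S i -> FF (X i)) -> glb_in FF (fun U V => incl V U) (img X S) G ->
  cinf L (img (fun i => piF L e (X i)) S) = piF L e G.
Proof.
move=> FFX [_ [G_lb G_glb]]; apply/le_anti/andP; split.
  apply: le_by_piF => U FFU Uz; apply: le_piF; apply: G_glb => // _ [i Si ->].
  apply/(piF_embedding _ _ FFU (FFX i Si)).
  by apply: le_trans Uz _; apply: cinf_le; exists i.
by apply: le_cinf => _ [i Si ->]; apply: le_piF; apply: G_lb; exists i.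
Qed.

Lemma piI_lub {I : Type} (T : I -> Prop) (X : I -> P -> Prop) G :
  (forall i, T i -> II (X i)) -> lub_in II incl (img X T) G ->
  csup L (img (fun i => piI L e (X i)) T) = piI L e G.
Proof.
move=> IIX [_ [G_ub G_lub]]; apply/le_anti/andP; split.
  by apply: csup_le => _ [i Ti ->]; apply: le_piI; apply: G_ub; exists i.
apply: le_by_piI => D IID zD; apply: le_piI; apply: G_lub => // _ [i Ti ->].
apply/(piI_embedding _ _ (IIX i Ti) IID).
by apply: le_trans zD; apply: le_csup; exists i.
Qed.

End CanonicalExtension.

Theorem proposition5p2 (dP dC : Order.disp_t) (P : porderType dP)
    (C : porderType dC) (L : complete_lattice C)
    (FF II : (P -> Prop) -> Prop) (e : P -> C) :
  standard_upsets FF -> standard_downsets II ->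
  canonical_extension L FF II e ->
  (* (1) pi_F (F ordered by reverse inclusion) and pi_I (I ordered by
         inclusion) are order embeddings *)
  (order_embedding_on FF (fun U V => incl V U) (piF L e) /\
   order_embedding_on II incl (piI L e)) /\
  (* (2) preservation of the existing meets / joins of principal sets *)
  (forall (S : P -> Prop) (G : P -> Prop),
     glb_in FF (fun U V => incl V U) (img up S) G ->
     cinf L (img (fun p => piF L e (up p)) S) = piF L e G) /\
  (forall (T : P -> Prop) (G : P -> Prop),
     lub_in II incl (img down T) G ->
     csup L (img (fun p => piI L e (down p)) T) = piI L e G).
Proof.
move=> FF_std II_std [e_completion [e_dense e_compact]].
split; first split.
- exact: (piF_embedding FF_std II_std e_completion e_compact).
- exact: (piI_embedding FF_std II_std e_completion e_compact).
split=> S G.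
- apply: (piF_glb FF_std II_std e_completion e_compact e_dense) => p _.
  exact: FF_std.2.
- apply: (piI_lub FF_std II_std e_completion e_compact e_dense) => p _.
  exact: II_std.2.
Qed.
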